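(* Let $G=(\mathcal{S},\mathcal{E})$ be a connected undirected graph with node set $\mathcal{S}=\{1,\dots,N\}$, let $I_G\in\mathbb{R}^{|\mathcal{E}|\times N}$ be an oriented incidence matrix of $G$, and let $A:=I_G\otimes I_{n_\theta}=(A_1,\dots,A_N)$ with column blocks $A_i\in\mathbb{R}^{|\mathcal{E}|n_\theta\times n_\theta}$. For $i\in\mathcal{S}$ let $M_i\in\mathbb{R}^{n_y\times n_\theta}$ have full column rank and $y_i\in\mathbb{R}^{n_y}$. Define $$S:=\sum_{i\in\mathcal{S}}A_i(M_i^\top M_i)^{-1}A_i^\top,\qquad s:=-\sum_{i\in\mathcal{S}}A_i(M_i^\top M_i)^{-1}M_i^\top y_i.$$ Then $s\in\operatorname{range}(S)$.
   Context: An oriented incidence matrix of $G$ has one row per edge $(i,j)\in\mathcal{E}$, with entry $+1$ in column $i$, $-1$ in column $j$, and $0$ elsewhere. $\otimes$ denotes the Kronecker product and $I_{n_\theta}$ the $n_\theta\times n_\theta$ identity. *)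

From HB Require Import structures.
From mathcomp Require Import all_boot all_order all_algebra.
Set Implicit Arguments. Unset Strict Implicit. Unset Printing Implicit Defensive.
Import Order.TTheory GRing.Theory Num.Theory.
Local Open Scope ring_scope.

(* Entry of a matrix indexed by naturals; 0 out of range. *)
Definition mxnat (R : nmodType) m n (A : 'M[R]_(m, n)) (i j : nat) : R :=
  match @insub nat (fun k => k < m)%N 'I_m i, @insub nat (fun k => k < n)%N 'I_n j with
  | Some i', Some j' => A i' j'
  | _, _ => 0
  end.

Definition kronmx (R : pzRingType) m n p q (A : 'M[R]_(m, n)) (B : 'M[R]_(p, q))
  : 'M[R]_(m * p, n * q) :=
  \matrix_(k < m * p, l < n * q)
     (mxnat A (k %/ p)%N (l %/ q)%N * mxnat B (k %% p)%N (l %% q)%N).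

(* The i-th column block (of width q) of a matrix with N*q columns:
   columns i*q, ..., i*q + q - 1 (i counted from 0). *)
Definition colblock (R : nmodType) r N q (A : 'M[R]_(r, N * q)) (i : 'I_N)
  : 'M[R]_(r, q) :=
  \matrix_(k < r, l < q) mxnat A k (i * q + l)%N.

(* An undirected graph on nodes 'I_N with m edges; edge k is given with an
   (arbitrary) orientation ep k = (tail, head). *)
Definition adj N m (ep : 'I_m -> 'I_N * 'I_N) : rel 'I_N :=
  fun u v => [exists k, (ep k == (u, v)) || (ep k == (v, u))].

Definition simple_edges N m (ep : 'I_m -> 'I_N * 'I_N) : Prop :=
  (forall k, (ep k).1 != (ep k).2) /\
  (forall k k', k != k' -> ep k' <> ep k /\ ep k' <> ((ep k).2, (ep k).1)).

Definition connected_graph N m (ep : 'I_m -> 'I_N * 'I_N) : Prop :=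
  forall u v, connect (adj ep) u v.

Definition incidence (R : pzRingType) N m (ep : 'I_m -> 'I_N * 'I_N) : 'M[R]_(m, N) :=
  \matrix_(k < m, i < N) (((i == (ep k).1) : nat)%:R - ((i == (ep k).2) : nat)%:R).

(* The block structure of A = I_G (x) I.
   Writing G_i = M_i^T M_i and C_i = A_i G_i^-1 M_i^T, one has
   S = sum_i C_i C_i^T and s = sum_i C_i (-y_i).  Over an ordered field a sum
   of Gram matrices sum_i C_i C_i^T has the same range as all the C_i
   together: if v is orthogonal to that range, then
   v^T (sum_i C_i C_i^T) v = sum_i |C_i^T v|^2 = 0 forces every C_i^T v to
   vanish. *)

From HB Require Import structures.
From mathcomp Require Import all_boot all_order all_algebra.
Set Implicit Arguments. Unset Strict Implicit. Unset Printing Implicit Defensive.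
Import Order.TTheory GRing.Theory Num.Theory.
Local Open Scope ring_scope.

Section Gram.
Variable R : realFieldType.

Lemma mxtrace_mulTmx m n (X : 'M[R]_(m, n)) :
  \tr (X^T *m X) = \sum_i \sum_j X j i ^+ 2.
Proof.
by apply: eq_bigr => i _; rewrite mxE; apply: eq_bigr => j _; rewrite mxE expr2.
Qed.

Lemma mxtrace_mulTmx_ge0 m n (X : 'M[R]_(m, n)) : 0 <= \tr (X^T *m X).
Proof.
by rewrite mxtrace_mulTmx; apply: sumr_ge0 => i _; apply: sumr_ge0 => j _;
  apply: sqr_ge0.
Qed.

Lemma mxtrace_mulTmx_eq0 m n (X : 'M[R]_(m, n)) : \tr (X^T *m X) = 0 -> X = 0.
Proof.
rewrite mxtrace_mulTmx => X0; apply/matrixP => j i; rewrite mxE.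
have sum_i0 := psumr_eq0P (fun i _ => sumr_ge0 _ (fun j _ => sqr_ge0 (X j i))) X0.
have := psumr_eq0P (fun j _ => sqr_ge0 (X j i)) (sum_i0 i isT) (i := j) isT.
by move/eqP; rewrite sqrf_eq0 => /eqP.
Qed.

Lemma sum_mulTmx_eq0 (I : finType) m n (X : I -> 'M[R]_(m, n)) :
  \sum_i (X i)^T *m X i = 0 -> forall i, X i = 0.
Proof.
move=> X0 i; apply: mxtrace_mulTmx_eq0.
have trX0 : \sum_i \tr ((X i)^T *m X i) = 0.
  by rewrite -(raddf_sum (@mxtrace _ n)) X0 raddf0.
exact: (psumr_eq0P (fun i _ => mxtrace_mulTmx_ge0 (X i)) trX0).
Qed.

Lemma trmx_sum_mulmxT (I : finType) m n (C : I -> 'M[R]_(m, n)) :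
  (\sum_i C i *m (C i)^T)^T = \sum_i C i *m (C i)^T.
Proof. by rewrite raddf_sum; apply: eq_bigr => i _; rewrite /= trmx_mul trmxK. Qed.

(* Test membership against the cokernel K of P: P K = 0 gives
   sum_j (C_j^T K)^T (C_j^T K) = K^T P K = 0. *)
Lemma trmx_sub_sum_mulmxT (I : finType) m n (C : I -> 'M[R]_(m, n)) i :
  ((C i)^T <= (\sum_j C j *m (C j)^T)%R)%MS.
Proof.
set P := (\sum_j _)%R; set K := cokermx P.
have gramK0 : \sum_j ((C j)^T *m K)^T *m ((C j)^T *m K) = 0.
  transitivity (K^T *m (P *m K)); last by rewrite mulmx_coker mulmx0.
  rewrite mulmx_suml mulmx_sumr; apply: eq_bigr => j _.
  by rewrite trmx_mul trmxK !mulmxA.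
by rewrite submxE (sum_mulTmx_eq0 gramK0).
Qed.

Lemma mxrank_mulTmx m n (X : 'M[R]_(m, n)) : \rank (X^T *m X) = \rank X.
Proof.
apply/eqP; rewrite eqn_leq mxrankS ?submxMl //=.
have := trmx_sub_sum_mulmxT (fun _ : 'I_1 => X^T) ord0.
by rewrite big_ord1 trmxK => /mxrankS.
Qed.

Lemma mulTmx_unitmx m n (M : 'M[R]_(m, n)) : \rank M = n -> M^T *m M \in unitmx.
Proof. by move=> rkM; rewrite -row_free_unit /row_free mxrank_mulTmx rkM. Qed.

Lemma sum_mulmxT_range (I : finType) m n (C : I -> 'M[R]_(m, n))
    (z : I -> 'cV[R]_n) :
  exists x, (\sum_i C i *m (C i)^T) *m x = \sum_i C i *m z i.
Proof.
set P := \sum_i _.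
have : ((\sum_i C i *m z i)%R^T <= P)%MS.
  rewrite raddf_sum; apply: summx_sub => i _.
  by rewrite /= trmx_mul (submx_trans (submxMl _ _)) ?trmx_sub_sum_mulmxT.
case/submxP=> D sD; exists D^T.
by rewrite -[P]trmx_sum_mulmxT -trmx_mul -sD trmxK.
Qed.

Lemma mulmxT_gram_inv k n p (B : 'M[R]_(k, n)) (M : 'M[R]_(p, n)) :
  \rank M = n ->
  let C := B *m invmx (M^T *m M) *m M^T in
  C *m C^T = B *m invmx (M^T *m M) *m B^T.
Proof.
move=> /mulTmx_unitmx unitG C; rewrite /C !trmx_mul trmxK trmx_inv trmx_mul trmxK.
by rewrite -!mulmxA (mulmxA M^T) mulKmx.
Qed.

End Gram.

Theorem lemma2 (R : realFieldType) (N m ntheta ny : nat)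
  (ep : 'I_m -> 'I_N * 'I_N)
  (Hsimple : simple_edges ep) (Hconn : connected_graph ep)
  (M : 'I_N -> 'M[R]_(ny, ntheta)) (y : 'I_N -> 'cV[R]_ny)
  (HM : forall i, \rank (M i) = ntheta) :
  let A : 'M[R]_(m * ntheta, N * ntheta) :=
    kronmx (incidence R ep) (1%:M : 'M[R]_ntheta) in
  let S : 'M[R]_(m * ntheta) :=
    \sum_(i < N) (colblock A i *m invmx ((M i)^T *m M i) *m (colblock A i)^T) in
  let s : 'cV[R]_(m * ntheta) :=
    - \sum_(i < N) (colblock A i *m invmx ((M i)^T *m M i) *m (M i)^T *m y i) in
  exists x : 'cV[R]_(m * ntheta), S *m x = s.
Proof.
move=> A S s.
pose C i := colblock A i *m invmx ((M i)^T *m M i) *m (M i)^T.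
have [x Sx] := sum_mulmxT_range C (fun i => - y i).
exists x; rewrite /S /s -sumrN -(eq_bigr _ (fun i _ => mulmxT_gram_inv _ (HM i))).
by rewrite Sx; apply: eq_bigr => i _; rewrite mulmxN.
Qed.
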